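(* Let $\mathcal C$ be a category, $n\ge1$, and let $f:A\to B$ be a degeneracy map in $Z^n(\mathcal C)$. Then $f$ factors, uniquely up to isomorphism, as a simple degeneracy map followed by a parallel degeneracy map.
   Context: Notation: for $n\ge 0$, $[n]$ denotes $\{0,\dots,n-1\}$; $\Delta_+$ is the category of these finite total orders and order-preserving maps. For monotone $\varphi:[n]\to[m]$ define $\hat\varphi:[m+1]\to[n+1]$ by $\hat\varphi(i)=\min(\{j\in[n]:\varphi(j)\ge i\}\cup\{n\})$. Zigzags: in a category $\mathcal C$, a zigzag $X$ of length $n$ is a diagram $X(r_0)\xrightarrow{x_0} X(s_0)\xleftarrow{x'_0} X(r_1)\to\cdots\xrightarrow{x_{n-1}} X(s_{n-1})\xleftarrow{x'_{n-1}} X(r_n)$. A zigzag map $f:X\to Y$ (lengths $n$, $m$) consists of a monotone $f_s:[n]\to[m]$, regular slices $f(r_i):X(r_{\hat{f_s}(i)})\to Y(r_i)$ for $0\le i\le m$ and singular slices $f(s_j):X(s_j)\to Y(s_{f_s(j)})$ for $0\le j<n$, such that for each $0\le i<m$: if $f_s^{-1}(i)\neq\emptyset$ with least element $p$, greatest $q$, then $f(s_p)\circ x_p=y_i\circ f(r_i)$, $f(s_q)\circ x'_q=y'_i\circ f(r_{i+1})$, $f(s_j)\circ x'_j=f(s_{j+1})\circ x_{j+1}$ for $p\le j<q$; if $f_s^{-1}(i)=\emptyset$ then $y_i\circ f(r_i)=y'_i\circ f(r_{i+1})$. Composition: $(g\circ f)_s=g_s\circ f_s$, $(g\circ f)(s_j)=g(s_{f_s(j)})\circ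 f(s_j)$, $(g\circ f)(r_i)=g(r_i)\circ f(r_{\hat{g_s}(i)})$. This gives a category $Z(\mathcal C)$; $Z^0(\mathcal C)=\mathcal C$, $Z^n(\mathcal C)=Z(Z^{n-1}(\mathcal C))$. $\pi:Z(\mathcal C)\to\Delta_+$ sends a zigzag of length $n$ to $[n]$ and $f$ to $f_s$; $f$ is $\pi$-vertical if $\pi(f)$ is an identity; $f:x\to y$ is $\pi$-cocartesian if for every $h:x\to y'$ and $u:\pi(y)\to\pi(y')$ with $u\circ\pi(f)=\pi(h)$ there is a unique $v:y\to y'$ with $v\circ f=h$, $\pi(v)=u$. Degeneracy maps in $Z^n(\mathcal C)$ (by induction on $n$): in $Z^0(\mathcal C)$ the isomorphisms; for $n\ge1$ the maps generated under composition by simple degeneracy maps (the $\pi$-cocartesian maps $f$ with $\pi(f)$ a monomorphism of $\Delta_+$) and parallel degeneracy maps (the $\pi$-vertical maps whose regular and singular slices are all degeneracy maps in $Z^{n-1}(\mathcal C)$). *)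

From mathcomp Require Import all_boot.
Set Implicit Arguments.
Unset Strict Implicit.
Unset Printing Implicit Defensive.

Record Category := {
  cOb : Type;
  cHom : cOb -> cOb -> Type;
  cid : forall a, cHom a a;
  ccomp : forall a b c, cHom b c -> cHom a b -> cHom a c;
  ccompA : forall a b c d (h : cHom c d) (g : cHom b c) (f : cHom a b),
      ccomp h (ccomp g f) = ccomp (ccomp h g) f;
  ccomp1l : forall a b (f : cHom a b), ccomp (cid b) f = f;
  ccomp1r : forall a b (f : cHom a b), ccomp f (cid a) = f }.
Arguments ccomp {_ _ _ _} _ _.

(* "Category data with distinguished (valid) objects and morphisms".
   Z^n(C) is presented as such a structure: its genuine objects/morphisms
   are exactly those satisfying okOb/okHom. *)
Record CatD := {
  Ob : Type;
  Hom : Ob -> Ob -> Type;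
  idm : forall a, Hom a a;
  comp : forall a b c, Hom b c -> Hom a b -> Hom a c;
  okOb : Ob -> Prop;
  okHom : forall a b, Hom a b -> Prop }.
Arguments Hom : clear implicits.
Arguments idm {_} _.
Arguments comp {_ _ _ _} _ _.
Arguments okOb {_} _.
Arguments okHom {_ _ _} _.

Definition catD (C : Category) : CatD :=
  {| Ob := cOb C; Hom := @cHom C; idm := @cid C; comp := @ccomp C;
     okOb := fun _ => True; okHom := fun _ _ _ => True |}.

(* packed arrows, used to compare morphisms whose (propositionally equal)
   endpoints are given by different index expressions *)
Definition pk (D : CatD) (a b : Ob D) (h : Hom D a b)
  : {ab : Ob D * Ob D & Hom D ab.1 ab.2} := existT _ (a, b) h.
Arguments pk {_ _ _} _.

Definition isIso (D : CatD) (a b : Ob D) (f : Hom D a b) : Prop :=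
  okHom f /\ exists g : Hom D b a, okHom g /\ comp g f = idm a /\ comp f g = idm b.

(* Delta_+ : maps 'I_n -> 'I_m                                          *)
Definition monotone (n m : nat) (f : 'I_n -> 'I_m) : Prop :=
  forall a b : 'I_n, a <= b -> f a <= f b.

Definition hat (n m : nat) (f : 'I_n -> 'I_m) (i : 'I_m.+1) : 'I_n.+1 :=
  inord (\big[minn/n]_(j < n | i <= f j) (j : nat)).

Definition monoD (n m : nat) (f : 'I_n -> 'I_m) : Prop :=
  monotone f /\
  forall k (a b : 'I_k -> 'I_n), monotone a -> monotone b ->
    (forall t, f (a t) = f (b t)) -> forall t, a t = b t.

Definition rI (n : nat) (j : 'I_n) : 'I_n.+1 := widen_ord (leqnSn n) j.
Definition rS (n : nat) (j : 'I_n) : 'I_n.+1 := lift ord0 j.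

(* Zigzags: X(r_0) -x_0-> X(s_0) <-x'_0- X(r_1) -> ... <- X(r_n)        *)
Record zz (D : CatD) := Zz {
  zlen : nat;
  zreg : 'I_zlen.+1 -> Ob D;
  zsing : 'I_zlen -> Ob D;
  zfwd : forall j : 'I_zlen, Hom D (zreg (rI j)) (zsing j);
  zbwd : forall j : 'I_zlen, Hom D (zreg (rS j)) (zsing j) }.
Arguments zlen {D} X : rename.
Arguments zreg {D} X i : rename.
Arguments zsing {D} X j : rename.
Arguments zfwd {D} X j : rename.
Arguments zbwd {D} X j : rename.

(* Zigzag (pre)maps.  zr is the index map of the regular slices, required
   by okZm to be hat zs. *)
Record zmap (D : CatD) (X Y : zz D) := Zm {
  zs : 'I_(zlen X) -> 'I_(zlen Y);
  zr : 'I_(zlen Y).+1 -> 'I_(zlen X).+1;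
  zrs : forall i : 'I_(zlen Y).+1, Hom D (zreg X (zr i)) (zreg Y i);
  zss : forall j : 'I_(zlen X), Hom D (zsing X j) (zsing Y (zs j)) }.
Arguments zs {D X Y} f j : rename.
Arguments zr {D X Y} f i : rename.
Arguments zrs {D X Y} f i : rename.
Arguments zss {D X Y} f j : rename.

Definition okZz (D : CatD) (X : zz D) : Prop :=
  (forall i, okOb (zreg X i)) /\ (forall j, okOb (zsing X j)) /\
  (forall j, okHom (zfwd X j)) /\ (forall j, okHom (zbwd X j)).

Definition okZm (D : CatD) (X Y : zz D) (f : zmap X Y) : Prop :=
  monotone (zs f) /\
  (forall i, zr f i = hat (zs f) i) /\
  (forall i, okHom (zrs f i)) /\ (forall j, okHom (zss f j)) /\
  (forall i : 'I_(zlen Y),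
     (forall p q : 'I_(zlen X), zs f p = i -> zs f q = i ->
        (forall j, zs f j = i -> p <= j <= q) ->
        pk (comp (zss f p) (zfwd X p)) = pk (comp (zfwd Y i) (zrs f (rI i))) /\
        pk (comp (zss f q) (zbwd X q)) = pk (comp (zbwd Y i) (zrs f (rS i))) /\
        (forall j j' : 'I_(zlen X), p <= j -> j < q -> (j' : nat) = j.+1 ->
           pk (comp (zss f j) (zbwd X j)) = pk (comp (zss f j') (zfwd X j')))) /\
     ((forall j, zs f j <> i) ->
        pk (comp (zfwd Y i) (zrs f (rI i))) = pk (comp (zbwd Y i) (zrs f (rS i))))).

Definition zid (D : CatD) (X : zz D) : zmap X X :=
  @Zm D X X (fun j => j) (fun i => i) (fun i => idm _) (fun j => idm _).

Definition zcomp (D : CatD) (X Y W : zz D) (g : zmap Y W) (f : zmap X Y) : zmap X W :=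
  @Zm D X W (fun j => zs g (zs f j)) (fun i => zr f (zr g i))
     (fun i => comp (zrs g i) (zrs f (zr g i)))
     (fun j => comp (zss g (zs f j)) (zss f j)).

Definition Z (D : CatD) : CatD :=
  {| Ob := zz D; Hom := @zmap D; idm := @zid D; comp := @zcomp D;
     okOb := @okZz D; okHom := @okZm D |}.

Fixpoint iterZ (n : nat) (D : CatD) : CatD :=
  match n with 0 => D | k.+1 => Z (iterZ k D) end.

Definition vertical (D : CatD) (X Y : zz D) (f : zmap X Y) : Prop :=
  zlen X = zlen Y /\ forall j, (zs f j : nat) = j.

Definition cocartesian (D : CatD) (X Y : zz D) (f : zmap X Y) : Prop :=
  forall (Y' : zz D) (h : zmap X Y'), okZz Y' -> okZm h ->
  forall u : 'I_(zlen Y) -> 'I_(zlen Y'), monotone u ->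
    (forall j, u (zs f j) = zs h j) ->
    (exists v : zmap Y Y', okZm v /\ zcomp v f = h /\ forall j, zs v j = u j) /\
    (forall v v' : zmap Y Y', okZm v -> okZm v' ->
       zcomp v f = h -> zcomp v' f = h ->
       (forall j, zs v j = u j) -> (forall j, zs v' j = u j) -> v = v').

Definition simpleDeg (D : CatD) (X Y : zz D) (f : zmap X Y) : Prop :=
  okZm f /\ cocartesian f /\ monoD (zs f).

Definition parallelDeg (D : CatD) (P : forall a b : Ob D, Hom D a b -> Prop)
    (X Y : zz D) (f : zmap X Y) : Prop :=
  okZm f /\ vertical f /\ (forall i, P _ _ (zrs f i)) /\ (forall j, P _ _ (zss f j)).

Inductive genComp (D : CatD) (P : forall a b : Ob D, Hom D a b -> Prop)
  : forall a b : Ob D, Hom D a b -> Prop :=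
| gc_base a b (f : Hom D a b) : P a b f -> genComp P f
| gc_comp a b c (f : Hom D a b) (g : Hom D b c) :
    okOb b -> genComp P f -> genComp P g -> genComp P (comp g f).

Fixpoint degen (D : CatD) (n : nat)
  : forall a b : Ob (iterZ n D), Hom (iterZ n D) a b -> Prop :=
  match n as n0 return forall a b : Ob (iterZ n0 D), Hom (iterZ n0 D) a b -> Prop with
  | 0 => @isIso D
  | k.+1 => @genComp (Z (iterZ k D))
              (fun a b f => simpleDeg f \/ parallelDeg (@degen D k) f)
  end.

(* The compatibility conditions on a zigzag map [f : X -> Y] say precisely that all
   arrows [X(r_a) -> Y(s_i)] obtained by composing a slice of [f] with a structure
   map of [X] or [Y] agree; in this form they are visibly stable under composition.
   Every degeneracy map [f] is injective on singular indices, has degeneracy maps as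
   slices, and at each singular index [i] missed by [f] the composite [y_i \o f(r_i)]
   is a degeneracy map; this property is stable under composition and holds for
   simple and parallel degeneracies.  For an injective monotone [phi], inserting
   identity zigzags into [A] at the indices missed by [phi] gives a pi-cocartesian
   map over [phi] out of [A]; a map [f] with the above property factors through it
   by a vertical map whose slices are degeneracy maps, the composites [y_i \o f(r_i)]
   filling the inserted slots.  Uniqueness follows from the universal property of
   cocartesian maps. *)

From mathcomp Require Import all_boot zify.
From Stdlib Require Import FunctionalExtensionality Eqdep IndefiniteDescription.
Set Implicit Arguments.
Unset Strict Implicit.
Unset Printing Implicit Defensive.

Definition packed (D : CatD) := {ab : Ob D * Ob D & Hom D ab.1 ab.2}.

Section Packed.
Variable D : CatD.

Lemma pk_inj (a b : Ob D) (f g : Hom D a b) : pk f = pk g -> f = g.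
Proof.
exact: (inj_pair2 (Ob D * Ob D) (fun ab : Ob D * Ob D => Hom D ab.1 ab.2) (a, b) f g).
Qed.

Lemma pk_ends (a b a' b' : Ob D) (f : Hom D a b) (g : Hom D a' b') :
  pk f = pk g -> a = a' /\ b = b'.
Proof. by move=> /(f_equal (@projT1 _ _)) [-> ->]. Qed.

Lemma pk_transport (Q : forall a b : Ob D, Hom D a b -> Prop) (a b a' b' : Ob D)
    (f : Hom D a b) (g : Hom D a' b') :
  pk f = pk g -> Q a b f -> Q a' b' g.
Proof. by move=> e; case: (pk_ends e) => ea eb; subst a' b'; rewrite (pk_inj e). Qed.

Lemma pk_comp (a b c a' b' c' : Ob D) (g : Hom D b c) (f : Hom D a b)
    (g' : Hom D b' c') (f' : Hom D a' b') :
  pk g = pk g' -> pk f = pk f' -> pk (comp g f) = pk (comp g' f').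
Proof.
move=> eg ef; case: (pk_ends eg) => eb ec; case: (pk_ends ef) => ea _.
by subst b' c' a'; rewrite (pk_inj eg) (pk_inj ef).
Qed.

Definition castH (a b a' b' : Ob D) (ea : a = a') (eb : b = b') (f : Hom D a b) :
    Hom D a' b' :=
  match ea in _ = x return Hom D x b' with
  | erefl => match eb in _ = y return Hom D a y with erefl => f end end.

Lemma pk_castH (a b a' b' : Ob D) (ea : a = a') (eb : b = b') (f : Hom D a b) :
  pk (castH ea eb f) = pk f.
Proof. by case: a' / ea; case: b' / eb. Qed.

Lemma pk_of_ends (a b : Ob D) (c : packed D) :
  projT1 c = (a, b) -> exists h : Hom D a b, pk h = c.
Proof. by case: c => [[x y] h] /= [ex ey]; subst x y; exists h. Qed.

End Packed.

Record cat_laws (D : CatD) : Prop := CatLaws {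
  law_assoc : forall (a b c d : Ob D) (h : Hom D c d) (g : Hom D b c) (f : Hom D a b),
      comp h (comp g f) = comp (comp h g) f;
  law_idl : forall (a b : Ob D) (f : Hom D a b), comp (idm b) f = f;
  law_idr : forall (a b : Ob D) (f : Hom D a b), comp f (idm a) = f;
  law_ok_comp : forall (a b c : Ob D) (f : Hom D a b) (g : Hom D b c),
      okHom f -> okHom g -> okHom (comp g f);
  law_ok_idm : forall a : Ob D, okHom (idm a) }.

Section PackedLaws.
Variables (D : CatD) (L : cat_laws D).

Lemma pk_assoc (a b c d : Ob D) (h : Hom D c d) (g : Hom D b c) (f : Hom D a b) :
  pk (comp h (comp g f)) = pk (comp (comp h g) f).
Proof. by rewrite (law_assoc L). Qed.

Lemma pk_comp_idr (a b b' c : Ob D) (g : Hom D b c) (f : Hom D a b) :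
  pk f = pk (idm b') -> pk (comp g f) = pk g.
Proof.
by move=> e; case: (pk_ends e) => ea eb; subst a b'; rewrite (pk_inj e) (law_idr L).
Qed.

Lemma pk_comp_idl (a b b' c : Ob D) (g : Hom D b c) (f : Hom D a b) :
  pk g = pk (idm b') -> pk (comp g f) = pk f.
Proof.
by move=> e; case: (pk_ends e) => ea eb; subst c b'; rewrite (pk_inj e) (law_idl L).
Qed.

End PackedLaws.

Section BigMin.
Variables (n : nat) (P : pred 'I_n).

Lemma bigmin_leq (r : seq 'I_n) (j : 'I_n) :
  j \in r -> P j -> \big[minn/n]_(k <- r | P k) (k : nat) <= j.
Proof.
elim: r => // x r IH; rewrite inE big_cons => /orP [/eqP <-|jr] Pj.
  by rewrite Pj geq_minl.
case: (P x); last exact: IH.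
by rewrite geq_min IH ?orbT.
Qed.

Lemma bigmin_attained (r : seq 'I_n) :
  let b := \big[minn/n]_(k <- r | P k) (k : nat) in
  b = n \/ exists k, P k /\ b = k.
Proof.
elim: r => [|x r IH] /=; first by rewrite big_nil; left.
rewrite big_cons; case Px: (P x) => //.
by rewrite /minn; case: ifP => _; [right; exists x|exact: IH].
Qed.

Lemma bigmin_leq_bound (r : seq 'I_n) : \big[minn/n]_(k <- r | P k) (k : nat) <= n.
Proof. by case: (bigmin_attained r) => [->|[k [_ ->]]] //; apply: ltnW. Qed.

End BigMin.

Lemma eq_leq_bounded (n a b : nat) : a <= n -> b <= n ->
  (forall j, j < n -> (a <= j) = (b <= j)) -> a = b.
Proof.
move=> an bn H; case: (ltngtP a b) => // ab.
  by have := H a (leq_trans ab bn); rewrite leqnn leqNgt ab.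
by have := H b (leq_trans ab an); rewrite leqnn leqNgt ab.
Qed.

Section Hat.
Variables (n m : nat) (f : 'I_n -> 'I_m).

Lemma hat_val (i : 'I_m.+1) :
  (hat f i : nat) = \big[minn/n]_(j < n | i <= f j) (j : nat).
Proof. by rewrite /hat inordK // ltnS bigmin_leq_bound. Qed.

Lemma hat_leq_bound (i : 'I_m.+1) : hat f i <= n.
Proof. by rewrite -ltnS ltn_ord. Qed.

Hypothesis mf : monotone f.

Lemma hat_adjoint (i : 'I_m.+1) (j : 'I_n) : (hat f i <= j) = (i <= f j).
Proof.
rewrite hat_val; apply/idP/idP => [|h]; last by rewrite bigmin_leq ?mem_index_enum.
case: (bigmin_attained (fun j : 'I_n => i <= f j) (index_enum 'I_n)) => [->|[k [Pk ->]]].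
  by rewrite leqNgt ltn_ord.
by move=> kj; apply: leq_trans Pk (mf kj).
Qed.

Lemma hat_monotone (i i' : 'I_m.+1) : i <= i' -> hat f i <= hat f i'.
Proof.
move=> ii'; case: (ltnP (hat f i') n) => [h|h]; last exact: leq_trans (hat_leq_bound i) h.
have := hat_adjoint i' (Ordinal h); rewrite /= leqnn => /esym e.
by rewrite (hat_adjoint i (Ordinal h)) (leq_trans ii').
Qed.

End Hat.

Lemma hat_comp (n m p : nat) (f : 'I_n -> 'I_m) (g : 'I_m -> 'I_p) :
  monotone f -> monotone g -> forall i, hat (fun j => g (f j)) i = hat f (hat g i).
Proof.
move=> mf mg i; have mgf : monotone (fun j => g (f j)) by move=> a b ab; apply/mg/mf.
apply: val_inj; apply: (@eq_leq_bounded n); rewrite ?hat_leq_bound // => j jn.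
rewrite (hat_adjoint mgf _ (Ordinal jn)) (hat_adjoint mf _ (Ordinal jn)).
by rewrite (hat_adjoint mg).
Qed.

Lemma hat_id (n : nat) (i : 'I_n.+1) : hat (fun j : 'I_n => j) i = i.
Proof.
apply: val_inj; apply: (@eq_leq_bounded n); first exact: hat_leq_bound.
  by rewrite -ltnS ltn_ord.
move=> j jn; by rewrite (hat_adjoint (f := fun j : 'I_n => j) _ i (Ordinal jn)).
Qed.

Section Fibre.
Variables (n m : nat) (phi : 'I_n -> 'I_m).
Hypothesis mphi : monotone phi.

Lemma fibre_hat_rI_leq (i : 'I_m) (j : 'I_n) : phi j = i -> hat phi (rI i) <= j.
Proof. by move=> e; rewrite (hat_adjoint mphi) e. Qed.

Lemma fibre_lt_hat_rS (i : 'I_m) (j : 'I_n) : phi j = i -> j < hat phi (rS i).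
Proof. by move=> e; rewrite ltnNge (hat_adjoint mphi) e /= ltnn. Qed.

Lemma hat_rI_leq_rS (i : 'I_m) : hat phi (rI i) <= hat phi (rS i).
Proof. by apply: hat_monotone => //=; rewrite /bump /=. Qed.

Lemma hat_fibre (i : 'I_m) (j : 'I_n) :
  hat phi (rI i) <= j -> j < hat phi (rS i) -> phi j = i.
Proof.
rewrite (hat_adjoint mphi) ltnNge (hat_adjoint mphi) /= /bump /= => h1 h2.
by apply: val_inj => /=; lia.
Qed.

Lemma hat_empty_fibre (i : 'I_m) :
  (forall j, phi j <> i) -> hat phi (rI i) = hat phi (rS i).
Proof.
move=> H; apply: val_inj; apply/eqP; rewrite eqn_leq hat_rI_leq_rS /=.
case: (ltnP (hat phi (rI i)) n) => [h|h]; last exact: leq_trans (hat_leq_bound _ _) h.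
have := hat_adjoint mphi (rI i) (Ordinal h); rewrite /= leqnn => /esym hh.
have ne : phi (Ordinal h) != i by apply/eqP/H.
rewrite (hat_adjoint mphi _ (Ordinal h)) /= /bump /=.
by move: ne hh; rewrite -val_eqE /=; lia.
Qed.

Lemma hat_rI_fibre_min (i : 'I_m) (p : 'I_n) :
  phi p = i -> (forall j, phi j = i -> p <= j) -> hat phi (rI i) = rI p.
Proof.
move=> ep H; apply: val_inj; apply/eqP; rewrite eqn_leq fibre_hat_rI_leq //=.
case: (ltnP (hat phi (rI i)) p) => // h.
have hn : (hat phi (rI i) : nat) < n by apply: ltn_trans h (ltn_ord p).
have := hat_adjoint mphi (rI i) (Ordinal hn); rewrite /= leqnn => /esym hh.
have := @mphi (Ordinal hn) p (ltnW h); rewrite ep => hh2.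
have : phi (Ordinal hn) = i by apply: val_inj => /=; lia.
by move/H => /=; rewrite leqNgt h.
Qed.

Lemma hat_rS_fibre_max (i : 'I_m) (q : 'I_n) :
  phi q = i -> (forall j, phi j = i -> j <= q) -> hat phi (rS i) = rS q.
Proof.
move=> eq H; apply: val_inj; apply/eqP.
rewrite eqn_leq /= /bump /= (fibre_lt_hat_rS eq) andbT.
case: (ltnP q.+1 (hat phi (rS i))) => // h.
have hn : q.+1 < n by apply: leq_trans h (hat_leq_bound _ _).
have := hat_adjoint mphi (rS i) (Ordinal hn); rewrite /= /bump /= leqNgt h /= => /esym hh.
have := @mphi q (Ordinal hn) (leqnSn _); rewrite eq => hh2.
have : phi (Ordinal hn) = i by apply: val_inj => /=; move: hh; rewrite ltnNge /=; lia.
by move/H => /=; rewrite ltnn.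
Qed.

Lemma fibre_interval (i : 'I_m) (j : 'I_n) : phi j = i -> exists p q : 'I_n,
  [/\ phi p = i, phi q = i, (forall j', phi j' = i -> p <= j' <= q),
      hat phi (rI i) = rI p & hat phi (rS i) = rS q].
Proof.
move=> ej; have lo := fibre_hat_rI_leq ej; have hi := fibre_lt_hat_rS ej.
have h1 : (hat phi (rI i) : nat) < n by apply: leq_ltn_trans lo (ltn_ord j).
have h2 : (hat phi (rS i)).-1 < n by have := hat_leq_bound phi (rS i); lia.
set p := Ordinal h1; set q := Ordinal h2.
have ep : phi p = i by apply: hat_fibre => /=; lia.
have eq : phi q = i by apply: hat_fibre => /=; lia.
have bnd j' : phi j' = i -> p <= j' <= q.
  by move=> e; have := fibre_hat_rI_leq e; have := fibre_lt_hat_rS e; rewrite /=; lia.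
exists p, q; split => //.
- by apply: hat_rI_fibre_min => // j' /bnd /andP [].
- by apply: hat_rS_fibre_max => // j' /bnd /andP [].
Qed.

End Fibre.

Lemma zmap_eq (D : CatD) (X Y : zz D) (f g : zmap X Y) :
  (forall j, zs f j = zs g j) -> (forall i, zr f i = zr g i) ->
  (forall i, pk (zrs f i) = pk (zrs g i)) -> (forall j, pk (zss f j) = pk (zss g j)) ->
  f = g.
Proof.
case: f => s1 r1 rs1 ss1; case: g => s2 r2 rs2 ss2 /= es er ers ess.
have Es : s1 = s2 by apply: functional_extensionality.
have Er : r1 = r2 by apply: functional_extensionality.
subst s2 r2; f_equal; apply: functional_extensionality_dep => x; exact: pk_inj.
Qed.

Section ZCompLaws.
Variables (D : CatD) (L : cat_laws D).

Lemma zcompA (X Y W V : zz D) (h : zmap W V) (g : zmap Y W) (f : zmap X Y) :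
  zcomp h (zcomp g f) = zcomp (zcomp h g) f.
Proof. by apply: zmap_eq => //= *; rewrite (law_assoc L). Qed.

Lemma zcomp_idl (X Y : zz D) (f : zmap X Y) : zcomp (zid Y) f = f.
Proof. by apply: zmap_eq => //= *; rewrite (law_idl L). Qed.

Lemma zcomp_idr (X Y : zz D) (f : zmap X Y) : zcomp f (zid X) = f.
Proof. by apply: zmap_eq => //= *; rewrite (law_idr L). Qed.

End ZCompLaws.

Inductive induced (D : CatD) (X Y : zz D) (f : zmap X Y) (i : 'I_(zlen Y))
    (a : 'I_(zlen X).+1) : packed D -> Prop :=
| induced_fwd : a = zr f (rI i) -> induced f i a (pk (comp (zfwd Y i) (zrs f (rI i))))
| induced_bwd : a = zr f (rS i) -> induced f i a (pk (comp (zbwd Y i) (zrs f (rS i))))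
| induced_sfwd j : zs f j = i -> a = rI j -> induced f i a (pk (comp (zss f j) (zfwd X j)))
| induced_sbwd j : zs f j = i -> a = rS j -> induced f i a (pk (comp (zss f j) (zbwd X j))).

Definition coherent (D : CatD) (X Y : zz D) (f : zmap X Y) :=
  [/\ monotone (zs f), (forall i, zr f i = hat (zs f) i),
      (forall i, okHom (zrs f i)), (forall j, okHom (zss f j)) &
      forall i a c c', induced f i a c -> induced f i a c' -> c = c'].

Section Induced.
Variables (D : CatD) (X Y : zz D) (f : zmap X Y).

Lemma induced_hom i a c : induced f i a c ->
  exists h : Hom D (zreg X a) (zsing Y i), pk h = c.
Proof. by move=> C; apply: pk_of_ends; case: C => [->|->|j <- ->|j <- ->]. Qed.

Lemma induced_between i a c : monotone (zs f) -> (forall i, zr f i = hat (zs f) i) ->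
  induced f i a c -> zr f (rI i) <= a <= zr f (rS i).
Proof.
move=> mf ezr; case=> [->|->|j ej ->|j ej ->]; rewrite !ezr.
- by rewrite leqnn hat_rI_leq_rS.
- by rewrite leqnn hat_rI_leq_rS.
- by rewrite (fibre_hat_rI_leq mf ej) ltnW // (fibre_lt_hat_rS mf ej).
- by rewrite (fibre_lt_hat_rS mf ej) andbT; apply: leq_trans (fibre_hat_rI_leq mf ej) _.
Qed.

Section OkInduced.
Hypotheses (mf : monotone (zs f)) (ezr : forall i, zr f i = hat (zs f) i).
Variable i : 'I_(zlen Y).
Hypothesis fibre_sq : forall p q : 'I_(zlen X), zs f p = i -> zs f q = i ->
  (forall j, zs f j = i -> p <= j <= q) ->
  pk (comp (zss f p) (zfwd X p)) = pk (comp (zfwd Y i) (zrs f (rI i))) /\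
  pk (comp (zss f q) (zbwd X q)) = pk (comp (zbwd Y i) (zrs f (rS i))) /\
  (forall j j' : 'I_(zlen X), p <= j -> j < q -> (j' : nat) = j.+1 ->
     pk (comp (zss f j) (zbwd X j)) = pk (comp (zss f j') (zfwd X j'))).
Hypothesis empty_sq : (forall j, zs f j <> i) ->
  pk (comp (zfwd Y i) (zrs f (rI i))) = pk (comp (zbwd Y i) (zrs f (rS i))).

Let fibre j : zs f j = i -> exists p q : 'I_(zlen X),
  [/\ zs f p = i, zs f q = i, (forall j', zs f j' = i -> p <= j' <= q),
      zr f (rI i) = rI p & zr f (rS i) = rS q].
Proof. by move=> ej; rewrite !ezr; exact: fibre_interval ej. Qed.

Lemma induced_fwd_bwd : zr f (rI i) = zr f (rS i) ->
  pk (comp (zfwd Y i) (zrs f (rI i))) = pk (comp (zbwd Y i) (zrs f (rS i))).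
Proof.
move=> e; apply: empty_sq => j ej.
by move: (fibre_hat_rI_leq mf ej) (fibre_lt_hat_rS mf ej); rewrite -!ezr e; lia.
Qed.

Lemma induced_fwd_sfwd j : zs f j = i -> zr f (rI i) = rI j ->
  pk (comp (zfwd Y i) (zrs f (rI i))) = pk (comp (zss f j) (zfwd X j)).
Proof.
move=> ej e; have [p [q [ep eq bnd ep' _]]] := fibre ej.
have -> : j = p by apply: val_inj; move: e; rewrite ep' => /(f_equal val).
by case: (fibre_sq ep eq bnd) => [-> _].
Qed.

Lemma induced_bwd_sbwd j : zs f j = i -> zr f (rS i) = rS j ->
  pk (comp (zbwd Y i) (zrs f (rS i))) = pk (comp (zss f j) (zbwd X j)).
Proof.
move=> ej e; have [p [q [ep eq bnd _ eq']]] := fibre ej.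
have -> : j = q.
  by apply: val_inj; move: e; rewrite eq' => /(f_equal val) /=; rewrite /bump /=; lia.
by case: (fibre_sq ep eq bnd) => [_ [-> _]].
Qed.

Lemma induced_sfwd_sbwd j0 j1 : zs f j0 = i -> zs f j1 = i -> rI j0 = rS j1 ->
  pk (comp (zss f j0) (zfwd X j0)) = pk (comp (zss f j1) (zbwd X j1)).
Proof.
move=> e0 e1 /(f_equal val) /= e; have [p [q [ep eq bnd _ _]]] := fibre e0.
case: (fibre_sq ep eq bnd) => [_ [_ M]]; apply/esym; apply: M => //.
- by case/andP: (bnd _ e1).
- by case/andP: (bnd _ e0); rewrite e.
Qed.

Lemma induced_fwd_sbwd j : zs f j = i -> zr f (rI i) = rS j -> False.
Proof.
by move=> ej e; move: (fibre_hat_rI_leq mf ej); rewrite -ezr e /= /bump /=; lia.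
Qed.

Lemma induced_bwd_sfwd j : zs f j = i -> zr f (rS i) = rI j -> False.
Proof. by move=> ej e; move: (fibre_lt_hat_rS mf ej); rewrite -ezr e /=; lia. Qed.

Lemma induced_unique a c c' : induced f i a c -> induced f i a c' -> c = c'.
Proof.
have rI_inj (j0 j1 : 'I_(zlen X)) : rI j0 = rI j1 -> j0 = j1.
  by move/(f_equal val) => /= e; apply: val_inj.
have rS_inj (j0 j1 : 'I_(zlen X)) : rS j0 = rS j1 -> j0 = j1.
  by move/(f_equal val); rewrite /= /bump /= => -[e]; apply: val_inj.
case=> [e0|e0|j0 ej0 e0|j0 ej0 e0]; case=> [e1|e1|j1 ej1 e1|j1 ej1 e1];
  have E := etrans (esym e0) e1; rewrite ?E //.
all: first [ by apply: induced_fwd_bwd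
           | by apply/esym/induced_fwd_bwd
           | by apply: induced_fwd_sfwd
           | by apply/esym/induced_fwd_sfwd
           | by apply: induced_bwd_sbwd
           | by apply/esym/induced_bwd_sbwd
           | by apply: induced_sfwd_sbwd
           | by apply/esym/induced_sfwd_sbwd
           | by case: (induced_fwd_sbwd ej1 E)
           | by case: (induced_fwd_sbwd ej0 (esym E))
           | by case: (induced_bwd_sfwd ej1 E)
           | by case: (induced_bwd_sfwd ej0 (esym E))
           | by move/rI_inj: E => ->
           | by move/rS_inj: E => -> ].
Qed.

End OkInduced.

Lemma okZmP : okZm f <-> coherent f.
Proof.
split=> [[mf [ezr [okr [oks H]]]]|[mf ezr okr oks U]].
  by split => // i a c c'; case: (H i) => Hne He; apply: induced_unique.
split => //; split => //; split => //; split => // i.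
split => [p q ep eq bnd|ne]; last first.
  apply: (U i (zr f (rI i))); first exact: induced_fwd.
  by apply: induced_bwd; rewrite !ezr hat_empty_fibre.
have in_fibre (j : 'I_(zlen X)) : p <= j <= q -> zs f j = i.
  case/andP=> pj jq; apply: val_inj; apply/eqP; rewrite eqn_leq.
  by move: (mf _ _ pj) (mf _ _ jq); rewrite ep eq => -> ->.
split; [|split].
- apply: (U i (rI p)); [apply: induced_sfwd => //|apply: induced_fwd].
  by rewrite ezr; apply/esym; apply: hat_rI_fibre_min => // j /bnd /andP [].
- apply: (U i (rS q)); [apply: induced_sbwd => //|apply: induced_bwd].
  by rewrite ezr; apply/esym; apply: hat_rS_fibre_max => // j /bnd /andP [].
- move=> j j' pj jq ej'.
  apply: (U i (rS j)); [apply: induced_sbwd => //|apply: induced_sfwd].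
  + by apply: in_fibre; rewrite pj ltnW.
  + by apply: in_fibre; rewrite ej' jq andbT ltnW.
  + by apply: val_inj => /=; rewrite ej'.
Qed.

End Induced.

Section InducedExistence.
Variables (D : CatD) (L : cat_laws D) (X Y : zz D) (h : zmap X Y).

Lemma induced_ok : okZz X -> okZz Y -> coherent h ->
  forall l a c, induced h l a c -> okHom (projT2 c).
Proof.
case=> _ [_ [okfX okbX]] [_ [_ [okfY okbY]]] [_ _ okr oks _] l a c.
by case=> *; apply: (law_ok_comp L);
  by [apply: okr|apply: oks|apply: okfX|apply: okbX|apply: okfY|apply: okbY].
Qed.

Lemma induced_exists : coherent h -> forall l (a : 'I_(zlen X).+1),
  zr h (rI l) <= a <= zr h (rS l) -> exists c, induced h l a c.
Proof.
case=> mh ezh _ _ _ l a /andP [a1 a2].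
case: (boolP [exists j : 'I_(zlen X), (zs h j == l) && ((j : nat) == a)]).
  case/existsP => j /andP [/eqP ej /eqP ja].
  by eexists; apply: (induced_sfwd ej); apply: ord_inj.
move=> _.
case: (boolP [exists j : 'I_(zlen X), (zs h j == l) && ((j.+1 : nat) == a)]).
  case/existsP => j /andP [/eqP ej /eqP ja].
  by eexists; apply: (induced_sbwd ej); apply: ord_inj => /=; rewrite /bump /=; lia.
move/existsPn => n4.
eexists; apply: induced_fwd; apply: ord_inj; apply/eqP; rewrite eqn_leq a1 andbT.
rewrite leqNgt; apply/negP => lt.
have an : a.-1 < zlen X by move: a2; rewrite ezh; have := hat_leq_bound (zs h) (rS l); lia.
have ej : zs h (Ordinal an) = l by apply: (hat_fibre mh); rewrite -!ezh /=; lia.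
move: (n4 (Ordinal an)); rewrite ej eqxx /=; have -> : a.-1.+1 = (a : nat) by lia.
by rewrite eqxx.
Qed.

End InducedExistence.

Section Composition.
Variables (D : CatD) (L : cat_laws D) (X Y W : zz D) (f : zmap X Y) (g : zmap Y W).
Hypotheses (Of : coherent f) (Og : coherent g).

Let mf := let: And5 x _ _ _ _ := Of in x.
Let ezf := let: And5 _ x _ _ _ := Of in x.
Let Uf := let: And5 _ _ _ _ x := Of in x.
Let mg := let: And5 x _ _ _ _ := Og in x.
Let ezg := let: And5 _ x _ _ _ := Og in x.
Let Ug := let: And5 _ _ _ _ x := Og in x.

(* Consecutive indices [l], [l+1] of a fibre of [zs g] meet at [Y(r_(l+1))], where
   coherence of [g] glues [g(s_l) \o y'_l] to [g(s_(l+1)) \o y_(l+1)]. *)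
Lemma induced_chain (i : 'I_(zlen W)) (a : 'I_(zlen X).+1) d :
  forall (l l' : 'I_(zlen Y)) (s s' : Ob D) (h : Hom D s (zsing Y l))
    (h' : Hom D s' (zsing Y l')),
  (l' : nat) = l + d -> zs g l = i -> zs g l' = i ->
  induced f l a (pk h) -> induced f l' a (pk h') ->
  pk (comp (zss g l) h) = pk (comp (zss g l') h').
Proof.
elim: d => [|d IH] l l' s s' h h' e gl gl' C C'.
  have E : l' = l by apply: val_inj; rewrite /= e addn0.
  by subst l'; apply: pk_comp => //; exact: Uf C C'.
have l1lt : l.+1 < zlen Y by have := ltn_ord l'; lia.
set l1 := Ordinal l1lt.
have /andP [A1 A1'] := induced_between mf ezf C.
have /andP [A2 A2'] := induced_between mf ezf C'.
have M : zr f (rS l) <= zr f (rI l').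
  by rewrite !ezf; apply: hat_monotone => //=; rewrite /bump /=; lia.
have Ea : a = zr f (rS l) by apply: ord_inj; lia.
have El : rS l = rI l1 by apply: val_inj.
have gl1 : zs g l1 = i.
  apply: val_inj; apply/eqP; rewrite eqn_leq.
  have := @mg l l1 (leqnSn _); have := @mg l1 l' ltac:(rewrite /=; lia).
  by rewrite gl gl' => -> ->.
have Eg : pk (comp (zss g l) (zbwd Y l)) = pk (comp (zss g l1) (zfwd Y l1)).
  by apply: (Ug (i := i) (a := rS l)); [exact: induced_sbwd|exact: induced_sfwd].
have C0 : induced f l a (pk (comp (zbwd Y l) (zrs f (rS l)))) by exact: induced_bwd.
have C1 : induced f l1 a (pk (comp (zfwd Y l1) (zrs f (rI l1)))).
  by apply: induced_fwd; rewrite Ea El.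
rewrite (pk_comp (erefl (pk (zss g l))) (Uf C C0)) (pk_assoc L).
rewrite (pk_comp Eg (_ : pk (zrs f (rS l)) = pk (zrs f (rI l1)))) ?El //.
by rewrite -(pk_assoc L); apply: IH => //=; lia.
Qed.

Definition through_fibre (i : 'I_(zlen W)) (a : 'I_(zlen X).+1) (c : packed D) :=
  exists l (s : Ob D) (h : Hom D s (zsing Y l)),
    [/\ zs g l = i, induced f l a (pk h) & c = pk (comp (zss g l) h)].

Definition zcomp_fwd_arrow (i : 'I_(zlen W)) :=
  pk (comp (zfwd W i) (comp (zrs g (rI i)) (zrs f (zr g (rI i))))).

Lemma comp_fwd_through_fibre i l0 : zs g l0 = i ->
  through_fibre i (zr f (zr g (rI i))) (zcomp_fwd_arrow i).
Proof.
move=> el0; have [p [q [ep eq bnd Ep Eq]]] := fibre_interval mg el0; rewrite -ezg in Ep.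
have Eg : pk (comp (zfwd W i) (zrs g (rI i))) = pk (comp (zss g p) (zfwd Y p)).
  by apply: (Ug (i := i) (a := rI p)); [apply: induced_fwd|apply: induced_sfwd].
exists p, _, (comp (zfwd Y p) (zrs f (rI p))); split => //.
  by apply: induced_fwd; rewrite Ep.
rewrite /zcomp_fwd_arrow (pk_assoc L).
rewrite (pk_comp Eg (_ : pk (zrs f (zr g (rI i))) = pk (zrs f (rI p)))).
  by rewrite (pk_assoc L).
by rewrite Ep.
Qed.

Lemma comp_bwd_through_fibre i l0 : zs g l0 = i ->
  through_fibre i (zr f (zr g (rS i)))
    (pk (comp (zbwd W i) (comp (zrs g (rS i)) (zrs f (zr g (rS i)))))).
Proof.
move=> el0; have [p [q [ep eq bnd Ep Eq]]] := fibre_interval mg el0; rewrite -ezg in Eq.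
have Eg : pk (comp (zbwd W i) (zrs g (rS i))) = pk (comp (zss g q) (zbwd Y q)).
  by apply: (Ug (i := i) (a := rS q)); [apply: induced_bwd|apply: induced_sbwd].
exists q, _, (comp (zbwd Y q) (zrs f (rS q))); split => //.
  by apply: induced_bwd; rewrite Eq.
rewrite (pk_assoc L) (pk_comp Eg (_ : pk (zrs f (zr g (rS i))) = pk (zrs f (rS q)))).
  by rewrite (pk_assoc L).
by rewrite Eq.
Qed.

Lemma comp_bwd_zcomp_fwd_arrow i : (forall l, zs g l <> i) ->
  pk (comp (zbwd W i) (comp (zrs g (rS i)) (zrs f (zr g (rS i))))) = zcomp_fwd_arrow i.
Proof.
move=> ne; have E : zr g (rI i) = zr g (rS i) by rewrite !ezg; exact: hat_empty_fibre.
have Eg : pk (comp (zfwd W i) (zrs g (rI i))) = pk (comp (zbwd W i) (zrs g (rS i))).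
  by apply: (Ug (i := i) (a := zr g (rI i))); [apply: induced_fwd|apply: induced_bwd].
rewrite /zcomp_fwd_arrow (pk_assoc L) (pk_assoc L); apply/esym.
by apply: pk_comp => //; rewrite E.
Qed.

Lemma induced_comp i a c : induced (zcomp g f) i a c ->
  through_fibre i a c \/ ((forall l, zs g l <> i) /\ c = zcomp_fwd_arrow i).
Proof.
case: (boolP [exists l, zs g l == i]) => [/existsP [l0 /eqP el0]|/existsPn ne].
  case=> [->|->|j ej ->|j ej ->]; left.
  - exact: comp_fwd_through_fibre el0.
  - exact: comp_bwd_through_fibre el0.
  - exists (zs f j), _, (comp (zss f j) (zfwd X j)); split => //.
      exact: induced_sfwd.
    by rewrite /= (pk_assoc L).
  - exists (zs f j), _, (comp (zss f j) (zbwd X j)); split => //.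
      exact: induced_sbwd.
    by rewrite /= (pk_assoc L).
have ne' l : zs g l <> i by move=> el; move: (ne l); rewrite el eqxx.
case=> [e|e|j ej _|j ej _]; right; split => //.
- by rewrite /=; apply: comp_bwd_zcomp_fwd_arrow.
- by case: (ne' _ ej).
- by case: (ne' _ ej).
Qed.

Lemma coherent_comp : coherent (zcomp g f).
Proof.
case: Of => _ _ okrf oksf _; case: Og => _ _ okrg oksg _.
split.
- by move=> a b ab; apply: mg; apply: mf.
- by move=> i; rewrite /= ezg ezf (hat_comp mf mg).
- by move=> i; apply: (law_ok_comp L); [exact: okrf|exact: okrg].
- by move=> j; apply: (law_ok_comp L); [exact: oksf|exact: oksg].
move=> i a c c' /induced_comp [[l [s [h [gl C ->]]]]|[ne ->]]
                /induced_comp [[l' [s' [h' [gl' C' ->]]]]|[ne' ->]] //.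
- case: (leqP l l') => ll.
    by apply: (induced_chain (i := i) (a := a) (d := l' - l)) => //; lia.
  by apply/esym; apply: (induced_chain (i := i) (a := a) (d := l - l')) => //; lia.
- by case: (ne' _ gl).
- by case: (ne _ gl').
Qed.

End Composition.

Lemma coherent_zid (D : CatD) (L : cat_laws D) (X : zz D) : coherent (zid X).
Proof.
split => //.
- by move=> i; rewrite hat_id.
- by move=> i; apply: (law_ok_idm L).
- by move=> j; apply: (law_ok_idm L).
have N i a c : induced (zid X) i a c ->
   (a = rI i /\ c = pk (zfwd X i)) \/ (a = rS i /\ c = pk (zbwd X i)).
  case=> [->|->|j /= <- ->|j /= <- ->] /=.
  - by left; rewrite (law_idr L).
  - by right; rewrite (law_idr L).
  - by left; rewrite (law_idl L).
  - by right; rewrite (law_idl L).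
move=> i a c c' /N [[-> ->]|[-> ->]] /N [[e ->]|[e ->]] //.
all: by move/(f_equal val): e => /=; rewrite /bump /=; lia.
Qed.

Lemma Z_laws (D : CatD) : cat_laws D -> cat_laws (Z D).
Proof.
move=> L; split.
- by move=> *; apply: zcompA.
- by move=> *; apply: zcomp_idl.
- by move=> *; apply: zcomp_idr.
- by move=> X Y W f g /okZmP Of /okZmP Og; apply/okZmP; apply: coherent_comp.
- by move=> X; apply/okZmP; apply: coherent_zid.
Qed.

Lemma monotone_inj_leq n m (f : 'I_n -> 'I_m) : monotone f -> injective f ->
  forall j : 'I_n, (j : nat) <= f j.
Proof.
move=> mf fi; suff H k (j : 'I_n) : (j : nat) = k -> k <= f j by move=> j; apply: H.
elim: k j => [//|k IH] j ej.
have kn : k < n by have := ltn_ord j; lia.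
have := IH (Ordinal kn) erefl; have := @mf (Ordinal kn) j ltac:(rewrite ej /=; lia).
have : f (Ordinal kn) != f j by apply/eqP => /fi /(f_equal val) /=; lia.
rewrite -val_eqE /=; lia.
Qed.

Lemma monoD_injective n m (f : 'I_n -> 'I_m) : monoD f -> injective f.
Proof.
case=> _ H a b e; have := H 1 (fun _ => a) (fun _ => b).
by move/(_ (fun _ _ _ => leqnn _) (fun _ _ _ => leqnn _) (fun _ => e) ord0).
Qed.

Lemma injective_monoD n m (f : 'I_n -> 'I_m) : monotone f -> injective f -> monoD f.
Proof. by move=> mf If; split => // k a b _ _ H t; apply: If. Qed.

Section ZIso.
Variables (D : CatD) (X Y : zz D) (v : zmap X Y) (w : zmap Y X).
Hypotheses (e1 : zcomp w v = zid X) (e2 : zcomp v w = zid Y) (Ov : okZm v) (Ow : okZm w).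

Let zs_wv j : zs w (zs v j) = j. Proof. exact: (f_equal (fun h => zs h j) e1). Qed.
Let zs_vw j : zs v (zs w j) = j. Proof. exact: (f_equal (fun h => zs h j) e2). Qed.
Let zr_vw i : zr w (zr v i) = i. Proof. exact: (f_equal (fun h => zr h i) e2). Qed.

Lemma iso_zss j : isIso (zss v j).
Proof.
case/okZmP: Ov => _ _ _ okv _; case/okZmP: Ow => _ _ _ okw _.
have eb : zsing X (zs w (zs v j)) = zsing X j by rewrite zs_wv.
set g := castH erefl eb (zss w (zs v j)).
have pg : pk g = pk (zss w (zs v j)) by exact: pk_castH.
split => //; exists g; split; first exact: (pk_transport (esym pg) (okw _)).
split; apply: pk_inj.
- rewrite (pk_comp pg (erefl (pk (zss v j)))).
  exact: (f_equal (fun h => pk (zss h j)) e1).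
- have E : pk (zss v j) = pk (zss v (zs w (zs v j))) by rewrite zs_wv.
  rewrite (pk_comp E pg).
  exact: (f_equal (fun h => pk (zss h (zs v j))) e2).
Qed.

Lemma iso_zrs i : isIso (zrs v i).
Proof.
case/okZmP: Ov => _ _ okv _ _; case/okZmP: Ow => _ _ okw _ _.
have ea : zreg Y (zr w (zr v i)) = zreg Y i by rewrite zr_vw.
set g := castH ea erefl (zrs w (zr v i)).
have pg : pk g = pk (zrs w (zr v i)) by exact: pk_castH.
split => //; exists g; split; first exact: (pk_transport (esym pg) (okw _)).
split; apply: pk_inj.
- have E : pk (zrs v i) = pk (zrs v (zr w (zr v i))) by rewrite zr_vw.
  rewrite (pk_comp pg E).
  exact: (f_equal (fun h => pk (zrs h (zr v i))) e1).
- rewrite (pk_comp (erefl (pk (zrs v i))) pg).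
  exact: (f_equal (fun h => pk (zrs h i)) e2).
Qed.

Lemma iso_vertical : vertical v.
Proof.
case/okZmP: Ov => mv _ _ _ _; case/okZmP: Ow => mw _ _ _ _.
have iv : injective (zs v) by move=> a b /(f_equal (zs w)); rewrite !zs_wv.
have iw : injective (zs w) by move=> a b /(f_equal (zs v)); rewrite !zs_vw.
split.
  apply/eqP; rewrite eqn_leq; have := leq_card _ iv; have := leq_card _ iw.
  by rewrite !card_ord => -> ->.
move=> j; apply/eqP; rewrite eqn_leq (monotone_inj_leq mv iv) andbT.
by have := monotone_inj_leq mw iw (zs v j); rewrite zs_wv.
Qed.

End ZIso.

Lemma iso_parallel (D : CatD) (P : forall a b : Ob D, Hom D a b -> Prop)
    (X Y : zz D) (v : zmap X Y) :
  (forall a b (h : Hom D a b), isIso h -> P a b h) ->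
  isIso (D := Z D) v -> parallelDeg P v.
Proof.
move=> Piso [Ov [w [Ow [e1 e2]]]].
split=> //; split; first exact: iso_vertical e1 e2 Ov Ow.
split=> [i|j]; apply: Piso; [exact: (@iso_zrs D X Y v w)|exact: (@iso_zss D X Y v w)].
Qed.

Record deg_class (D : CatD) (P : forall a b : Ob D, Hom D a b -> Prop) : Prop := DegClass {
  deg_comp : forall (a b c : Ob D) (f : Hom D a b) (g : Hom D b c),
     okOb b -> P a b f -> P b c g -> P a c (comp g f);
  deg_iso : forall (a b : Ob D) (f : Hom D a b), isIso f -> P a b f }.

Definition Zdeg (D : CatD) (P : forall a b : Ob D, Hom D a b -> Prop) :=
  @genComp (Z D) (fun a b f => simpleDeg f \/ parallelDeg P f).

Lemma Zdeg_class (D : CatD) (P : forall a b : Ob D, Hom D a b -> Prop) :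
  deg_class P -> deg_class (Zdeg P).
Proof.
move=> dP; split; first by move=> a b c f g ob Pf Pg; apply: gc_comp.
move=> X Y v iv; apply: gc_base; right; apply: iso_parallel iv; exact: deg_iso.
Qed.

Lemma catD_laws (C : Category) : cat_laws (catD C).
Proof. by split => //=; [exact: ccompA|exact: ccomp1l|exact: ccomp1r]. Qed.

Lemma catD_deg_class (C : Category) : deg_class (@isIso (catD C)).
Proof.
split => // a b c f g _ [_ [f' [_ [f1 f2]]]] [_ [g' [_ [g1 g2]]]].
split => //; exists (comp f' g'); split => //=; rewrite /= in f1 f2 g1 g2; split.
- by rewrite -ccompA (ccompA g' g f) g1 ccomp1l f1.
- by rewrite -ccompA (ccompA f f' g') f2 ccomp1l g2.
Qed.

Lemma iterZ_laws_deg_class (C : Category) (k : nat) :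
  cat_laws (iterZ k (catD C)) /\ deg_class (@degen (catD C) k).
Proof.
elim: k => [|k [L dP]]; first by split; [exact: catD_laws|exact: catD_deg_class].
by split; [exact: Z_laws|exact: Zdeg_class].
Qed.

(* For an injective monotone [phi : [n] -> [m]], [spread mphi iphi] is the zigzag of
   length [m] obtained from [A] by inserting an identity zigzag
   [A(r) -id-> A(r) <-id- A(r)] at every singular index missed by [phi]. *)
Section Spread.
Variables (D : CatD) (L : cat_laws D) (A : zz D) (m : nat) (phi : 'I_(zlen A) -> 'I_m).
Hypotheses (mphi : monotone phi) (iphi : injective phi).

Definition preim (i : 'I_m) : option 'I_(zlen A) := [pick j | phi j == i].

Lemma preim_img j : preim (phi j) = Some j.
Proof. by rewrite /preim; case: pickP => [j' /eqP /iphi -> //|/(_ j)]; rewrite eqxx. Qed.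

Lemma preim_some i j : preim i = Some j -> phi j = i.
Proof. by rewrite /preim; case: pickP => // j' /eqP e [<-]. Qed.

Lemma preim_none i : preim i = None -> forall j, phi j <> i.
Proof. by rewrite /preim; case: pickP => // H _ j e; move: (H j); rewrite e eqxx. Qed.

Lemma hat_rI_img j : hat phi (rI (phi j)) = rI j.
Proof. by apply: hat_rI_fibre_min => // j' /iphi ->. Qed.

Lemma hat_rS_img j : hat phi (rS (phi j)) = rS j.
Proof. by apply: hat_rS_fibre_max => // j' /iphi ->. Qed.

Definition spread_reg (i : 'I_m.+1) := zreg A (hat phi i).
Definition spread_sing_of (i : 'I_m) (o : option 'I_(zlen A)) :=
  if o is Some j then zsing A j else zreg A (hat phi (rI i)).
Definition spread_sing (i : 'I_m) := spread_sing_of i (preim i).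

Lemma preim_fwd_reg i j : preim i = Some j -> zreg A (rI j) = zreg A (hat phi (rI i)).
Proof. by move/preim_some => <-; rewrite hat_rI_img. Qed.
Lemma preim_bwd_reg i j : preim i = Some j -> zreg A (rS j) = zreg A (hat phi (rS i)).
Proof. by move/preim_some => <-; rewrite hat_rS_img. Qed.
Lemma preim_none_reg i :
  preim i = None -> zreg A (hat phi (rI i)) = zreg A (hat phi (rS i)).
Proof. by move/preim_none => H; rewrite (hat_empty_fibre mphi H). Qed.

Definition spread_fwd_of i (o : option 'I_(zlen A)) : preim i = o ->
    Hom D (zreg A (hat phi (rI i))) (spread_sing_of i o) :=
  match o with
  | Some j => fun e => castH (preim_fwd_reg e) erefl (zfwd A j)
  | None => fun _ => idm _
  end.
Definition spread_bwd_of i (o : option 'I_(zlen A)) : preim i = o ->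
    Hom D (zreg A (hat phi (rS i))) (spread_sing_of i o) :=
  match o with
  | Some j => fun e => castH (preim_bwd_reg e) erefl (zbwd A j)
  | None => fun e => castH (preim_none_reg e) erefl (idm _)
  end.

Definition spread_fwd i : Hom D (spread_reg (rI i)) (spread_sing i) :=
  spread_fwd_of (erefl (preim i)).
Definition spread_bwd i : Hom D (spread_reg (rS i)) (spread_sing i) :=
  spread_bwd_of (erefl (preim i)).

Definition spread : zz D := @Zz D m spread_reg spread_sing spread_fwd spread_bwd.

Lemma spread_of_structure i o (e : preim i = o) :
  (forall j, o = Some j ->
     pk (spread_fwd_of e) = pk (zfwd A j) /\ pk (spread_bwd_of e) = pk (zbwd A j)) /\
  (o = None -> pk (spread_fwd_of e) = pk (idm (zreg A (hat phi (rI i)))) /\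
               pk (spread_bwd_of e) = pk (idm (zreg A (hat phi (rI i))))).
Proof.
case: o e => [j|] e; split => //.
- by move=> j' [<-] /=; rewrite !pk_castH.
- by move=> _ /=; rewrite pk_castH.
Qed.

Lemma spread_structure i :
  (exists j, [/\ preim i = Some j, phi j = i, pk (spread_fwd i) = pk (zfwd A j) &
                 pk (spread_bwd i) = pk (zbwd A j)]) \/
  [/\ preim i = None, (forall j, phi j <> i),
      pk (spread_fwd i) = pk (idm (zreg A (hat phi (rI i)))) &
      pk (spread_bwd i) = pk (idm (zreg A (hat phi (rI i))))].
Proof.
have [S N] := spread_of_structure (erefl (preim i)).
case E: (preim i) => [j|].
  by left; exists j; have [S1 S2] := S j E; split => //; exact: preim_some.
by right; have [N1 N2] := N E; split => //; exact: preim_none.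
Qed.

Lemma spread_sing_img j : zsing A j = spread_sing (phi j).
Proof. by rewrite /spread_sing preim_img. Qed.

Definition spread_map : zmap A spread :=
  @Zm D A spread phi (hat phi) (fun i => idm (zreg A (hat phi i)))
     (fun j => castH erefl (spread_sing_img j) (idm (zsing A j))).

Lemma pk_spread_map_zss j : pk (zss spread_map j) = pk (idm (zsing A j)).
Proof. exact: pk_castH. Qed.

Lemma okZz_spread : okZz A -> okZz spread.
Proof.
case=> okr [oks [okf okb]]; split; [|split; [|split]] => /=.
- by move=> i; apply: okr.
- by move=> i; rewrite /spread_sing; case: (preim i) => [j|] /=; [apply: oks|apply: okr].
- move=> i; case: (spread_structure i) => [[j [_ _ e _]]|[_ _ e _]].
    exact: (pk_transport (esym e) (okf j)).
  exact: (pk_transport (esym e) (law_ok_idm L _)).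
- move=> i; case: (spread_structure i) => [[j [_ _ _ e]]|[_ _ _ e]].
    exact: (pk_transport (esym e) (okb j)).
  exact: (pk_transport (esym e) (law_ok_idm L _)).
Qed.

Definition spread_map_arrow (i : 'I_m) (a : 'I_(zlen A).+1) : packed D :=
  match preim i with
  | Some j => if a == rI j then pk (zfwd A j) else pk (zbwd A j)
  | None => pk (idm (zreg A a)) end.

Lemma rS_eq_rI n (j : 'I_n) : (rS j == rI j) = false.
Proof. by apply/negP => /eqP /(f_equal val) /=; rewrite /bump /=; lia. Qed.

Lemma spread_map_induced i a c : induced spread_map i a c -> c = spread_map_arrow i a.
Proof.
rewrite /spread_map_arrow.
case: (spread_structure i) => [[j0 [E ej0 F B]]|[E ne F B]]; rewrite E.
- case=> [e|e|j ej e|j ej e].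
  + by rewrite /= (law_idr L) F e /= -ej0 hat_rI_img eqxx.
  + by rewrite /= (law_idr L) B e /= -ej0 hat_rS_img rS_eq_rI.
  + have jj : j = j0 by apply: iphi; rewrite ej0.
    by subst j0; rewrite e eqxx; apply: (pk_comp_idl L); exact: pk_spread_map_zss.
  + have jj : j = j0 by apply: iphi; rewrite ej0.
    by subst j0; rewrite e rS_eq_rI; apply: (pk_comp_idl L); exact: pk_spread_map_zss.
- case=> [e|e|j ej e|j ej e].
  + by rewrite /= (law_idr L) F e.
  + by rewrite /= (law_idr L) B e /= -(hat_empty_fibre mphi ne).
  + by case: (ne j).
  + by case: (ne j).
Qed.

Lemma coherent_spread_map : coherent spread_map.
Proof.
split => //.
- by move=> i; apply: (law_ok_idm L).
- move=> j; apply: (pk_transport (esym (pk_spread_map_zss j))); exact: (law_ok_idm L).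
by move=> i a c c' /spread_map_induced -> /spread_map_induced ->.
Qed.

Section SpreadLift.
Variables (Y' : zz D) (h : zmap A Y') (u : 'I_m -> 'I_(zlen Y')).
Hypotheses (Oh : coherent h) (mu : monotone u) (hu : forall j, u (phi j) = zs h j).

Let ezh := let: And5 _ x _ _ _ := Oh in x.
Let Uh := let: And5 _ _ _ _ x := Oh in x.

Lemma zr_factor i : zr h i = hat phi (hat u i).
Proof.
rewrite ezh (_ : zs h = fun j => u (phi j)); first exact: hat_comp.
by apply: functional_extensionality => j; rewrite hu.
Qed.

Lemma gap_between i : zr h (rI (u i)) <= hat phi (rI i) <= zr h (rS (u i)).
Proof.
rewrite !zr_factor; apply/andP; split; apply: hat_monotone => //.
- exact: (fibre_hat_rI_leq mu (erefl (u i))).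
- exact: ltnW (fibre_lt_hat_rS mu (erefl (u i))).
Qed.

(* At a gap [i] of [phi], the singular slice of the lift is any arrow induced by
   [h] at [(u i, hat phi (rI i))]; all of them agree by coherence of [h]. *)
Lemma lift_zss_exists i : exists hh : Hom D (spread_sing i) (zsing Y' (u i)),
  (forall j, preim i = Some j -> pk hh = pk (zss h j)) /\
  (preim i = None -> exists c, induced h (u i) (hat phi (rI i)) c /\ pk hh = c).
Proof.
rewrite /spread_sing; case E: (preim i) => [j|] /=.
  have eb : zsing Y' (zs h j) = zsing Y' (u i) by rewrite -hu (preim_some E).
  by exists (castH erefl eb (zss h j)); split => // j' [<-]; exact: pk_castH.
have [c C] := induced_exists Oh (gap_between i).
have [hh Hh] := induced_hom C.
by exists hh; split => // _; exists c.
Qed.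

Definition lift_zss i :=
  proj1_sig (constructive_indefinite_description _ (lift_zss_exists i)).

Lemma lift_zss_spec i :
  (forall j, preim i = Some j -> pk (lift_zss i) = pk (zss h j)) /\
  (preim i = None -> exists c, induced h (u i) (hat phi (rI i)) c /\ pk (lift_zss i) = c).
Proof. exact: (proj2_sig (constructive_indefinite_description _ (lift_zss_exists i))). Qed.

Lemma lift_reg_eq i : zreg A (zr h i) = spread_reg (hat u i).
Proof. by rewrite /spread_reg zr_factor. Qed.

Definition spread_lift : zmap spread Y' :=
  @Zm D spread Y' u (hat u) (fun i => castH (lift_reg_eq i) erefl (zrs h i)) lift_zss.

Lemma pk_spread_lift_zrs i : pk (zrs spread_lift i) = pk (zrs h i).
Proof. exact: pk_castH. Qed.

Lemma spread_lift_induced l b c : induced spread_lift l b c ->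
  exists c', induced h l (hat phi b) c' /\ c = c'.
Proof.
case=> [e|e|i ei e|i ei e].
- eexists; split; first by apply: induced_fwd; rewrite e zr_factor.
  by apply: pk_comp => //; exact: pk_spread_lift_zrs.
- eexists; split; first by apply: induced_bwd; rewrite e zr_factor.
  by apply: pk_comp => //; exact: pk_spread_lift_zrs.
- have ei' : u i = l := ei.
  case: (spread_structure i) => [[j0 [E ej0 F B]]|[E ne F B]].
    eexists; split.
      apply: (induced_sfwd (j := j0)); first by rewrite -hu ej0.
      by rewrite e -ej0 hat_rI_img.
    exact: (pk_comp ((lift_zss_spec i).1 j0 E) F).
  have [c0 [C0 P0]] := (lift_zss_spec i).2 E.
  exists c0; split; first by rewrite e -ei'.
  by rewrite -P0; exact: (pk_comp_idr L _ F).
- have ei' : u i = l := ei.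
  case: (spread_structure i) => [[j0 [E ej0 F B]]|[E ne F B]].
    eexists; split.
      apply: (induced_sbwd (j := j0)); first by rewrite -hu ej0.
      by rewrite e -ej0 hat_rS_img.
    exact: (pk_comp ((lift_zss_spec i).1 j0 E) B).
  have [c0 [C0 P0]] := (lift_zss_spec i).2 E.
  exists c0; split; first by rewrite e -ei' -(hat_empty_fibre mphi ne).
  by rewrite -P0; exact: (pk_comp_idr L _ B).
Qed.

Lemma coherent_spread_lift : okZz A -> okZz Y' -> coherent spread_lift.
Proof.
move=> okA okY; split => //.
- by move=> i; apply: (pk_transport (esym (pk_spread_lift_zrs i))); case: Oh.
- move=> i; case: (spread_structure i) => [[j0 [E _ _ _]]|[E _ _ _]].
    by apply: (pk_transport (esym ((lift_zss_spec i).1 j0 E))); case: Oh.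
  have [c0 [C0 P0]] := (lift_zss_spec i).2 E.
  by have := induced_ok L okA okY Oh C0; rewrite -P0.
move=> l b c c' /spread_lift_induced [c1 [C1 ->]] /spread_lift_induced [c2 [C2 ->]].
exact: Uh C1 C2.
Qed.

Lemma spread_liftK : zcomp spread_lift spread_map = h.
Proof.
apply: zmap_eq => //=.
- by move=> i; rewrite zr_factor.
- by move=> i; rewrite (law_idr L); exact: pk_spread_lift_zrs.
- move=> j; rewrite (pk_comp_idr L _ (pk_spread_map_zss j)).
  exact: ((lift_zss_spec (phi j)).1 j (preim_img j)).
Qed.

End SpreadLift.

Section SpreadMapCancel.
Variables (Y' : zz D) (v : zmap spread Y').
Hypothesis Ov : coherent v.

Let mv := let: And5 x _ _ _ _ := Ov in x.
Let ezv := let: And5 _ x _ _ _ := Ov in x.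
Let Uv := let: And5 _ _ _ _ x := Ov in x.

Lemma gap_zss_prev (i i0 : 'I_m) : preim i = None -> (i0.+1 : nat) = i ->
  zs v i0 = zs v i -> pk (zss v i) = pk (comp (zss v i0) (spread_bwd i0)).
Proof.
move=> E e0 z0; have [[j [E' _ _ _]]|[_ _ F _]] := spread_structure i.
  by rewrite E in E'.
have ea : rI i = rS i0 by apply: ord_inj => /=; rewrite /bump /=; lia.
have U : pk (comp (zss v i) (spread_fwd i)) = pk (comp (zss v i0) (spread_bwd i0)).
  by apply: (Uv (i := zs v i) (a := rI i)); [apply: induced_sfwd|apply: induced_sbwd].
by rewrite -(pk_comp_idr L (zss v i) F).
Qed.

Lemma gap_zss_first (i : 'I_m) : preim i = None ->
  (forall i0 : 'I_m, (i0.+1 : nat) = i -> zs v i0 <> zs v i) ->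
  zr v (rI (zs v i)) = rI i /\
  pk (zss v i) = pk (comp (zfwd Y' (zs v i)) (zrs v (rI (zs v i)))).
Proof.
move=> E fresh; have [[j [E' _ _ _]]|[_ _ F _]] := spread_structure i.
  by rewrite E in E'.
have Emin : zr v (rI (zs v i)) = rI i.
  rewrite ezv; apply: hat_rI_fibre_min => // j ej; rewrite leqNgt; apply/negP => ji.
  have i0lt : i.-1 < m by have := ltn_ord i; lia.
  have ei0 : i.-1.+1 = i by rewrite prednK // (leq_ltn_trans _ ji).
  apply: (fresh (Ordinal i0lt) ei0); apply: val_inj; apply/eqP; rewrite eqn_leq.
  have := @mv (Ordinal i0lt) i ltac:(rewrite /=; lia).
  have := @mv j (Ordinal i0lt) ltac:(by rewrite /= -ltnS ei0).
  by rewrite ej => -> ->.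
have U : pk (comp (zss v i) (spread_fwd i)) =
         pk (comp (zfwd Y' (zs v i)) (zrs v (rI (zs v i)))).
  by apply: (Uv (i := zs v i) (a := rI i)); [apply: induced_sfwd|apply: induced_fwd].
by rewrite -(pk_comp_idr L (zss v i) F).
Qed.

End SpreadMapCancel.

Lemma spread_map_cancel (Y' : zz D) (v v' : zmap spread Y') :
  coherent v -> coherent v' ->
  zcomp v spread_map = zcomp v' spread_map -> (forall i, zs v i = zs v' i) -> v = v'.
Proof.
move=> Ov Ov' Ecomp zE; have [_ ezv _ _ _] := Ov; have [_ ezv' _ _ _] := Ov'.
have zsE : zs v = zs v' by apply: functional_extensionality.
have rsE i : pk (zrs v i) = pk (zrs v' i).
  by move: (f_equal (fun x => pk (zrs x i)) Ecomp) => /=; rewrite !(law_idr L).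
have img j : pk (zss v (phi j)) = pk (zss v' (phi j)).
  move: (f_equal (fun x => pk (zss x j)) Ecomp) => /=.
  by rewrite !(pk_comp_idr L _ (pk_spread_map_zss j)).
apply: zmap_eq => //; first by move=> i; rewrite ezv ezv' zsE.
suff H k (i : 'I_m) : (i : nat) < k -> pk (zss v i) = pk (zss v' i).
  by move=> i; apply: (H m).
elim: k i => [//|k IH] i ik.
case: (spread_structure i) => [[j [_ <- _ _]]|[E _ _ _]]; first exact: img.
case: (boolP [exists i0 : 'I_m, ((i0.+1 : nat) == i) && (zs v i0 == zs v i)]).
  case/existsP => i0 /andP [/eqP e0 /eqP z0].
  rewrite (gap_zss_prev Ov E e0 z0) (gap_zss_prev Ov' E e0) -?zE //.
  by apply: pk_comp => //; apply: IH; lia.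
move/existsPn => nA.
have fresh (w : zmap spread Y') : (forall i0, zs w i0 = zs v i0) ->
    forall i0 : 'I_m, (i0.+1 : nat) = i -> zs w i0 <> zs w i.
  by move=> ew i0 e0; rewrite !ew => z0; move: (nA i0); rewrite e0 z0 !eqxx.
have [_ ->] := gap_zss_first Ov E (fresh v (fun _ => erefl)).
have [_ ->] := gap_zss_first Ov' E (fresh v' (fun i0 => esym (zE i0))).
by rewrite -zE; apply: pk_comp.
Qed.

Lemma spread_map_cocartesian : okZz A -> cocartesian spread_map.
Proof.
move=> okA Y' h okY /okZmP Oh u mu hu; split.
  exists (spread_lift Oh mu hu); split; last split => //.
  - by apply/okZmP; apply: coherent_spread_lift.
  - exact: spread_liftK.
move=> v v' /okZmP Ov /okZmP Ov' E E' zv zv'.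
by apply: spread_map_cancel => // [|i]; [rewrite E E'|rewrite zv zv'].
Qed.

Lemma spread_map_simple : okZz A -> simpleDeg spread_map.
Proof.
move=> okA; split; first by apply/okZmP; exact: coherent_spread_map.
by split; [exact: spread_map_cocartesian|exact: injective_monoD].
Qed.

Lemma spread_lift_spec (Y' : zz D) (h : zmap A Y') : okZz A -> okZz Y' -> okZm h ->
  forall u : 'I_m -> 'I_(zlen Y'), monotone u -> (forall j, u (phi j) = zs h j) ->
  exists v : zmap spread Y',
    [/\ okZm v, zcomp v spread_map = h, (forall j, zs v j = u j) &
    forall i, preim i = None ->
      exists c, induced h (u i) (hat phi (rI i)) c /\ pk (zss v i) = c].
Proof.
move=> okA okY /okZmP Oh u mu hu; exists (spread_lift Oh mu hu); split => //.
- by apply/okZmP; apply: coherent_spread_lift.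
- exact: spread_liftK.
- by move=> i; exact: (lift_zss_spec Oh mu hu i).2.
Qed.

End Spread.

Section Cocartesian.
Variables (D : CatD) (L : cat_laws D).

Lemma isIso_idm (a : Ob D) : isIso (idm a).
Proof.
split; first exact: law_ok_idm.
by exists (idm a); rewrite (law_idl L); split => //; exact: law_ok_idm.
Qed.

Lemma cocartesian_endo_id (X M : zz D) (s : zmap X M) :
  okZz M -> okZm s -> cocartesian s ->
  forall v : zmap M M, okZm v -> zcomp v s = s -> (forall j, zs v j = j) -> v = zid M.
Proof.
move=> okM Os Cs v Ov Ev zv.
have [_ U] := Cs M s okM Os (fun j => j) (fun a b ab => ab) (fun j => erefl).
apply: U => //; [exact: (law_ok_idm (Z_laws L))|exact: zcomp_idl].
Qed.

Lemma cocartesian_vertical_iso (X M M' : zz D) (s : zmap X M) (s' : zmap X M')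
    (i : zmap M M') :
  okZz M -> okZz M' -> okZm s -> okZm s' -> cocartesian s -> cocartesian s' ->
  okZm i -> vertical i -> zcomp i s = s' -> isIso (D := Z D) i.
Proof.
move=> okM okM' Os Os' Cs Cs' Oi [e vi] Ei; have ZL := Z_laws L.
pose u (j : 'I_(zlen M')) := cast_ord (esym e) j.
have hu j : u (zs s' j) = zs s j by apply: ord_inj; rewrite /= -Ei /= vi.
have [[i' [Oi' [Ei' zi']]] _] := Cs' M s okM Os u (fun a b ab => ab) hu.
split => //; exists i'; split => //; split.
- apply: (cocartesian_endo_id okM Os Cs); first exact: (law_ok_comp ZL Oi Oi').
    by rewrite -zcompA // Ei Ei'.
  by move=> j /=; apply: ord_inj; rewrite zi' /= vi.
- apply: (cocartesian_endo_id okM' Os' Cs'); first exact: (law_ok_comp ZL Oi' Oi).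
    by rewrite -zcompA // Ei' Ei.
  by move=> j /=; apply: ord_inj; rewrite vi zi'.
Qed.

End Cocartesian.

Section Factorization.
Variables (D : CatD) (L : cat_laws D) (P : forall a b : Ob D, Hom D a b -> Prop).
Hypothesis dP : deg_class P.

(* The invariant of degeneracy maps: at a singular index [i] missed by [zs f],
   the arrow [y_i \o f(r_i)] becomes the singular slice of the parallel part. *)
Definition factorizable (X Y : zz D) (f : zmap X Y) :=
  [/\ okZm f, injective (zs f), (forall i, P (zrs f i)), (forall j, P (zss f j)) &
      forall i, (forall j, zs f j <> i) -> P (comp (zfwd Y i) (zrs f (rI i)))].

Lemma parallel_factorizable (X Y : zz D) (f : zmap X Y) : parallelDeg P f -> factorizable f.
Proof.
case=> Of [[el ev] [Pr Ps]]; split => //.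
  by move=> a b /(f_equal (@nat_of_ord _)); rewrite !ev => e; apply: ord_inj.
move=> i ne; have lt : (i : nat) < zlen X by rewrite el.
by case: (ne (Ordinal lt)); apply: ord_inj; rewrite ev.
Qed.

Lemma factorizable_comp (X Y W : zz D) (f : zmap X Y) (g : zmap Y W) :
  okZz Y -> factorizable f -> factorizable g -> factorizable (zcomp g f).
Proof.
move=> [okr [oks _]] [Of If Prf Psf Nf] [Og Ig Prg Psg Ng].
split.
- exact: (law_ok_comp (Z_laws L) Of Og).
- by move=> a b /Ig /If.
- by move=> i; apply: (deg_comp dP); [exact: okr|exact: Prf|exact: Prg].
- by move=> j; apply: (deg_comp dP); [exact: oks|exact: Psf|exact: Psg].
move=> i ne /=; apply: (pk_transport (esym (pk_assoc L _ _ _))).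
case: (boolP [exists l, zs g l == i]) => [/existsP [l /eqP el]|/existsPn nl]; last first.
  apply: (deg_comp dP); [exact: okr|exact: Prf|apply: Ng].
  by move=> l el; move: (nl l); rewrite el eqxx.
have /okZmP [mg ezg _ _ Ug] := Og.
have Er : zr g (rI i) = rI l.
  by rewrite ezg; apply: hat_rI_fibre_min => // j; rewrite -el => /Ig ->.
have Eg : pk (comp (zfwd W i) (zrs g (rI i))) = pk (comp (zss g l) (zfwd Y l)).
  by apply: (Ug i (rI l)); [apply: induced_fwd|apply: induced_sfwd].
have EF : pk (zrs f (zr g (rI i))) = pk (zrs f (rI l)) by rewrite Er.
apply: (pk_transport (esym (pk_comp Eg EF))); apply: (pk_transport (pk_assoc L _ _ _)).
apply: (deg_comp dP); [exact: oks| |exact: Psg].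
by apply: Nf => j ej; apply: (ne j); rewrite /= ej.
Qed.

Lemma spread_map_factorizable (A : zz D) m (phi : 'I_(zlen A) -> 'I_m)
    (mphi : monotone phi) (iphi : injective phi) :
  factorizable (spread_map mphi iphi).
Proof.
have Pid (a : Ob D) : P (idm a) by apply: (deg_iso dP); exact: isIso_idm.
split => //.
- by apply/okZmP; exact: coherent_spread_map.
- by move=> j; apply: (pk_transport (esym (pk_spread_map_zss mphi iphi j))); exact: Pid.
move=> i ne; apply: (pk_transport (esym (pk_comp_idr L _ (erefl _)))).
case: (spread_structure mphi iphi i) => [[j [_ ej _ _]]|[_ _ F _]].
  by case: (ne j).
exact: (pk_transport (esym F) (Pid _)).
Qed.

Lemma simple_factorizable (X Y : zz D) (f : zmap X Y) :
  okZz X -> okZz Y -> simpleDeg f -> factorizable f.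
Proof.
move=> okX okY [Of [Cf Mf]].
have If := monoD_injective Mf.
have /okZmP [mf _ _ _ _] := Of.
have okM := okZz_spread L mf If okX.
have Os : okZm (spread_map mf If) by apply/okZmP; exact: coherent_spread_map.
have [v [Ov Ev zv _]] :=
  spread_lift_spec L mf If okX okY Of (fun a b ab => ab) (fun j => erefl).
have iso_v : isIso (D := Z D) v.
  apply: (cocartesian_vertical_iso L okM okY Os Of _ Cf Ov) => //.
    exact: (spread_map_cocartesian L okX).
  by split => // j; rewrite zv.
rewrite -Ev; apply: factorizable_comp => //; first exact: spread_map_factorizable.
by apply: parallel_factorizable; apply: iso_parallel iso_v; exact: deg_iso.
Qed.

Lemma degen_factorizable (X Y : zz D) (f : zmap X Y) :
  Zdeg P f -> okZz X -> okZz Y -> factorizable f.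
Proof.
elim=> {X Y f} [X Y f [S|Pa]|X Y W f g okY _ IHf _ IHg] okX okW.
- exact: simple_factorizable.
- exact: parallel_factorizable.
- by apply: factorizable_comp => //; [apply: IHf|apply: IHg].
Qed.

Lemma factorizable_factor (X Y : zz D) (f : zmap X Y) :
  okZz X -> okZz Y -> factorizable f ->
  exists (M : zz D) (s : zmap X M) (p : zmap M Y),
    okZz M /\ simpleDeg s /\ parallelDeg P p /\ f = zcomp p s.
Proof.
move=> okX okY [Of If Prf Psf Nf]; have /okZmP [mf ezf _ _ Uf] := Of.
have [p [Op Ep zp gap_p]] :=
  spread_lift_spec L mf If okX okY Of (fun a b ab => ab) (fun j => erefl).
exists (spread mf If), (spread_map mf If), p; split; first exact: okZz_spread.
split; first exact: spread_map_simple.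
split=> //; split=> //; split; first by split => // j; rewrite zp.
split=> i.
  apply: (pk_transport _ (Prf i)).
  by rewrite -(f_equal (fun x => pk (zrs x i)) Ep) /= (law_idr L).
case: (spread_structure mf If i) => [[j [E <- _ _]]|[E ne _ _]].
  apply: (pk_transport _ (Psf j)).
  rewrite -(f_equal (fun x => pk (zss x j)) Ep) /=.
  exact: (pk_comp_idr L _ (pk_spread_map_zss mf If j)).
have [c [C Pc]] := gap_p i E.
have C' : induced f i (hat (zs f) (rI i)) (pk (comp (zfwd Y i) (zrs f (rI i)))).
  by apply: induced_fwd; rewrite ezf.
by apply: (pk_transport _ (Nf i ne)); rewrite Pc (Uf _ _ _ _ C C').
Qed.

Lemma factorization_unique (X Y M M' : zz D) (f : zmap X Y) (s : zmap X M) (p : zmap M Y)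
    (s' : zmap X M') (p' : zmap M' Y) :
  okZz Y -> okZz M -> okZz M' ->
  simpleDeg s -> parallelDeg P p -> f = zcomp p s ->
  simpleDeg s' -> parallelDeg P p' -> f = zcomp p' s' ->
  exists i : zmap M M', isIso (D := Z D) i /\ zcomp i s = s' /\ zcomp p' i = p.
Proof.
move=> okY okM okM' [Os [Cs _]] [Op [[lp vp] _]] Ef [Os' [Cs' _]] [Op' [[lp' vp'] _]] Ef'.
have e : zlen M = zlen M' by rewrite lp lp'.
pose u (j : 'I_(zlen M)) := cast_ord e j.
have vs j : (zs s j : nat) = zs f j by rewrite Ef /= vp.
have vs' j : (zs s' j : nat) = zs f j by rewrite Ef' /= vp'.
have hu j : u (zs s j) = zs s' j by apply: ord_inj; rewrite /= vs vs'.
have [[i [Oi [Ei zi]]] _] := Cs M' s' okM' Os' u (fun a b ab => ab) hu.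
have vi : vertical i by split => // j; rewrite zi.
exists i; split; first exact: (cocartesian_vertical_iso L okM okM' Os Os' Cs Cs' Oi vi Ei).
split => //.
have Of : okZm f by rewrite Ef; exact: (law_ok_comp (Z_laws L) Os Op).
have /okZmP [mp _ _ _ _] := Op.
have [_ U] := Cs Y f okY Of (zs p) mp (fun j => f_equal (zs^~ j) (esym Ef)).
apply: U => //.
- exact: (law_ok_comp (Z_laws L) Oi Op').
- by rewrite -zcompA // Ei.
- by move=> j /=; apply: ord_inj; rewrite vp' zi /= vp.
Qed.

End Factorization.

Theorem lemma3p5 (C : Category) (k : nat)
  (A B : zz (iterZ k (catD C))) (f : zmap A B) :
  okZz A -> okZz B -> @degen (catD C) k.+1 A B f ->
  (exists (M : zz (iterZ k (catD C))) (s : zmap A M) (p : zmap M B),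
      okZz M /\ simpleDeg s /\ parallelDeg (@degen (catD C) k) p /\ f = zcomp p s) /\
  (forall (M M' : zz (iterZ k (catD C))) (s : zmap A M) (p : zmap M B)
          (s' : zmap A M') (p' : zmap M' B),
      okZz M -> okZz M' ->
      simpleDeg s -> parallelDeg (@degen (catD C) k) p -> f = zcomp p s ->
      simpleDeg s' -> parallelDeg (@degen (catD C) k) p' -> f = zcomp p' s' ->
      exists i : zmap M M',
        isIso (D := Z (iterZ k (catD C))) i /\ zcomp i s = s' /\ zcomp p' i = p).
Proof.
move=> okA okB Df; have [L dP] := iterZ_laws_deg_class C k.
split; first by apply: (factorizable_factor L) => //; exact: (degen_factorizable L dP Df).
move=> M M' s p s' p' okM okM'; exact: (factorization_unique L okB okM okM').
Qed.
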